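(* Let $\lambda_1<\dots<\lambda_N$ be real and $u_1,\dots,u_N\in(-1,1)\setminus\{0\}$ with $\sum_{i=1}^Nu_i^2=1$, and set $s_{\lambda,u}(l)=\sum_{i=1}^N\frac{u_i^2}{l-\lambda_i}$ for $l>\lambda_N$. If $1>|\alpha|\ge|u_N|$, then $$\sup_{\sigma\in\mathbb{R}^N:\,|\sigma|=1,\,\sigma\cdot u=\alpha}\sum_{i=1}^N\lambda_i\sigma_i^2=\inf_{l>\lambda_N}\left\{l-\frac{\alpha^2}{s_{\lambda,u}(l)}\right\}.$$ If $\alpha\in[-|u_N|,|u_N|]$, then $$\lambda_N-\frac{2u_N^2}{\sqrt{1-u_N^2}}(\lambda_N-\lambda_1)\le\sup_{\sigma\in\mathbb{R}^N:\,|\sigma|=1,\,\sigma\cdot u=\alpha}\sum_{i=1}^N\lambda_i\sigma_i^2\le\lambda_N.$$ *)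

From HB Require Import structures.
From mathcomp Require Import all_boot all_order all_algebra.
From mathcomp Require Import all_classical all_reals.
Set Implicit Arguments. Unset Strict Implicit. Unset Printing Implicit Defensive.
Import Order.TTheory GRing.Theory Num.Theory.
Local Open Scope ring_scope.
Local Open Scope classical_set_scope.

Definition s_lu {R : realType} (n : nat) (lam u : 'I_n -> R) (l : R) : R :=
  \sum_(i < n) u i ^+ 2 / (l - lam i).

Definition rayleigh_set {R : realType} (n : nat) (lam u : 'I_n -> R) (alpha : R)
  : set R :=
  [set (\sum_(i < n) lam i * sigma i ^+ 2) | sigma in
     [set sigma : 'I_n -> R | Num.sqrt (\sum_(i < n) sigma i ^+ 2) = 1 /\
                               \sum_(i < n) sigma i * u i = alpha]].

Definition dual_set {R : realType} (n : nat) (lam u : 'I_n -> R) (lmax alpha : R)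
  : set R :=
  [set (l - alpha ^+ 2 / s_lu lam u l) | l in [set l : R | lmax < l]].

From HB Require Import structures.
From mathcomp Require Import all_boot all_order all_algebra.
From mathcomp Require Import all_classical all_reals all_analysis.
From mathcomp Require Import ring lra.
Import Order.TTheory GRing.Theory Num.Theory.
Import numFieldNormedType.Exports.
Local Open Scope ring_scope.
Local Open Scope classical_set_scope.

(* Weak duality is Cauchy-Schwarz: for l > lambda_N and a feasible sigma,
   alpha^2 = (sum_i sigma_i u_i)^2 <= (sum_i (l - lambda_i) sigma_i^2) s(l)
           = (l - sum_i lambda_i sigma_i^2) s(l).
   Equality holds for sigma_i proportional to u_i / (l - lambda_i), and this
   sigma is a unit vector exactly when s(l)^2 = alpha^2 sum_i u_i^2/(l - lambda_i)^2,
   i.e. at a critical point of l - alpha^2 / s(l).  When |u_N| < |alpha| < 1 such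
   an l exists by the intermediate value theorem, since s(l) behaves like
   u_N^2 / (l - lambda_N) near lambda_N and like 1 / l at infinity; when
   |alpha| = |u_N| the vector (alpha / u_N) e_N already attains lambda_N.
   For |alpha| <= |u_N|, a rotation of e_N towards the normalised restriction of
   u to the other coordinates is feasible and has Rayleigh quotient at least
   lambda_N - u_N^2 (lambda_N - lambda_1). *)

Lemma weighted_cauchy_schwarz {R : realFieldType} {m : nat} (w a b : 'I_m -> R) :
  (forall i, 0 < w i) ->
  (\sum_i a i * b i) ^+ 2 <= (\sum_i w i * a i ^+ 2) * (\sum_i b i ^+ 2 / w i).
Proof.
move=> w_gt0; have w_neq0 i : w i != 0 by rewrite gt_eqF.
set P := \sum_i a i * b i; set W := \sum_i w i * a i ^+ 2.
set S := \sum_i b i ^+ 2 / w i.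
have term_ge0 i : 0 <= b i ^+ 2 / w i by rewrite divr_ge0 ?sqr_ge0 ?ltW.
have [S0|S_neq0] := eqVneq S 0.
  have b0 i : b i = 0.
    have /eqP := psumr_eq0P (fun i _ => term_ge0 i) S0 (i := i) isT.
    by rewrite mulf_eq0 invr_eq0 (negbTE (w_neq0 i)) orbF sqrf_eq0 => /eqP.
  by rewrite /P big1 ?expr0n ?S0 ?mulr0 // => i _; rewrite b0 mulr0.
have S_gt0 : 0 < S by rewrite lt0r S_neq0 sumr_ge0.
set t := P / S.
have sum_sq_ge0 : 0 <= \sum_i w i * (a i - t * b i / w i) ^+ 2.
  by apply: sumr_ge0 => i _; rewrite mulr_ge0 ?sqr_ge0 ?ltW.
have expand : \sum_i w i * (a i - t * b i / w i) ^+ 2 = W - P ^+ 2 / S.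
  transitivity (W - 2 * t * P + t ^+ 2 * S); last by rewrite /t; field.
  rewrite /W /P /S !mulr_sumr -sumrB -big_split /=; apply: eq_bigr => i _.
  by field.
by move: sum_sq_ge0; rewrite expand subr_ge0 ler_pdivrMr.
Qed.

Lemma continuous_sum_frac {R : realType} {m : nat} (k : nat) (c d : 'I_m -> R)
    (x : R) :
  (forall i, x != d i) ->
  {for x, continuous (fun l => \sum_i c i / (l - d i) ^+ k)}.
Proof.
move=> x_neq; apply: (@cvg_big _ _ +%R 0 xpredT add_continuous) => // i _.
apply: cvgM; first exact: cvg_cst.
apply: cvgV; first by rewrite expf_neq0 // subr_eq0.
apply: (@continuous_comp _ _ _ (fun l => l - d i) (fun y => y ^+ k)).
- by apply: cvgB; [exact: cvg_id | exact: cvg_cst].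
- exact: exprn_continuous.
Qed.

Lemma unit_circle_point {R : rcfType} (p r alpha : R) :
  p ^+ 2 + r ^+ 2 = 1 -> `|alpha| <= `|p| ->
  exists c d, [/\ c ^+ 2 + d ^+ 2 = 1, c * p + d * r = alpha & d ^+ 2 <= p ^+ 2].
Proof.
move=> pr1 alpha_le; have p2_ge0 := sqr_ge0 p; have r2_ge0 := sqr_ge0 r.
have alpha2_le : alpha ^+ 2 <= p ^+ 2.
  by rewrite -real_normK ?num_real // -[p ^+ 2]real_normK ?num_real // lerXn2r.
set q := Num.sqrt (1 - alpha ^+ 2).
have q2 : q ^+ 2 = 1 - alpha ^+ 2 by rewrite sqr_sqrtr //; lra.
have q_ge0 : 0 <= q := sqrtr_ge0 _.
(* (c, d) = alpha (p, r) + t (-r, p), with the sign of t chosen so that the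
   two summands of d have opposite signs. *)
have [t [t2 opp]] : exists t, t ^+ 2 = 1 - alpha ^+ 2 /\ (alpha * r) * (t * p) <= 0.
  have [le0|gt0] := leP 0 (alpha * r * p).
    by exists (- q); split; [rewrite sqrrN | nra].
  by exists q; split => //; nra.
exists (alpha * p - t * r), (alpha * r + t * p); split.
- transitivity ((alpha ^+ 2 + t ^+ 2) * (p ^+ 2 + r ^+ 2)); first by ring.
  by rewrite t2 pr1; ring.
- transitivity (alpha * (p ^+ 2 + r ^+ 2)); first by ring.
  by rewrite pr1 mulr1.
- have a2 : (alpha * r) ^+ 2 <= p ^+ 2 by rewrite exprMn; nra.
  have b2 : (t * p) ^+ 2 <= p ^+ 2 by rewrite exprMn t2; nra.
  nra.
Qed.

Lemma sup_eq_inf_reached {R : realType} (A B : set R) :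
  B !=set0 -> (forall a b, A a -> B b -> a <= b) ->
  (exists2 a, A a & inf B <= a) -> sup A = inf B.
Proof.
move=> [b0 Bb0] le_AB [a0 Aa0 inf_le_a0].
apply: le_anti; apply/andP; split.
- apply: ge_sup; first by exists a0.
  by move=> a Aa; apply: lb_le_inf; [exists b0 | move=> b; exact: le_AB].
- apply: le_trans inf_le_a0 (ub_le_sup _ Aa0).
  by exists b0 => a Aa; exact: le_AB.
Qed.

Lemma rayleigh_setP {R : realType} {n : nat} (lam u : 'I_n -> R) (alpha x : R) :
  rayleigh_set lam u alpha x <->
  exists sigma : 'I_n -> R, [/\ \sum_i sigma i ^+ 2 = 1,
    \sum_i sigma i * u i = alpha & \sum_i lam i * sigma i ^+ 2 = x].
Proof.
split=> [[sigma [norm1 dot] <-]|[sigma [norm1 dot <-]]]; exists sigma => //.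
  have norm_ge0 : 0 <= \sum_i sigma i ^+ 2.
    by apply: sumr_ge0 => i _; exact: sqr_ge0.
  by split=> //; rewrite -(sqr_sqrtr norm_ge0) norm1 expr1n.
by rewrite /= norm1 sqrtr1.
Qed.

(* [s2_lu] is [- s_lu'], so the critical points of [l - alpha^2 / s_lu l]
   are the solutions of [s_lu l ^+ 2 = alpha ^+ 2 * s2_lu l]. *)
Definition s2_lu {R : realType} {n : nat} (lam u : 'I_n -> R) (l : R) : R :=
  \sum_(i < n) u i ^+ 2 / (l - lam i) ^+ 2.

Section RayleighDuality.
Context {R : realType} {n : nat} {lam u : 'I_n.+1 -> R}.
Hypothesis lam_lt : forall i j : 'I_n.+1, (i < j)%N -> lam i < lam j.
Hypothesis u_norm1 : \sum_i u i ^+ 2 = 1.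

Local Notation N := (@ord_max n).
Local Notation s := (s_lu lam u).
Local Notation s2 := (s2_lu lam u).
Local Notation rayleigh := (rayleigh_set lam u).
Local Notation dual := (dual_set lam u (lam N)).

Lemma lam_lt_max i : i != N -> lam i < lam N.
Proof.
move=> iN; apply: lam_lt; rewrite ltn_neqAle -ltnS ltn_ord andbT.
by apply: contra_neq iN => iN; exact: val_inj.
Qed.

Lemma lam_le_max i : lam i <= lam N.
Proof. by have [->|/lam_lt_max/ltW] := eqVneq i N. Qed.

Lemma lam_min_le i : lam ord0 <= lam i.
Proof.
have [->|i0] := eqVneq i ord0; first by [].
by apply/ltW/lam_lt; rewrite lt0n; apply: contra_neq i0 => i0; exact: val_inj.
Qed.

Lemma sub_lam_gt0 {l} i : lam N < l -> 0 < l - lam i.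
Proof. by move=> lt_l; rewrite subr_gt0 (le_lt_trans (lam_le_max i)). Qed.

Lemma s_lu_ge {l} : lam N < l -> (l - lam ord0)^-1 <= s l.
Proof.
move=> lt_l; rewrite /s_lu -[_^-1]mul1r -u_norm1 mulr_suml.
apply: ler_sum => i _; rewrite ler_wpM2l ?sqr_ge0 //.
by rewrite lef_pV2 ?posrE ?sub_lam_gt0 // lerB // lam_min_le.
Qed.

Lemma s_lu_gt0 {l} : lam N < l -> 0 < s l.
Proof.
by move=> lt_l; rewrite (lt_le_trans _ (s_lu_ge lt_l)) // invr_gt0 sub_lam_gt0.
Qed.

Lemma rayleigh_le_max alpha x : rayleigh alpha x -> x <= lam N.
Proof.
move=> /rayleigh_setP[sigma [norm1 _ <-]].
rewrite -[lam N]mulr1 -norm1 mulr_sumr; apply: ler_sum => i _.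
by rewrite ler_wpM2r ?sqr_ge0 ?lam_le_max.
Qed.

Lemma rayleigh_le_dual alpha l x :
  lam N < l -> rayleigh alpha x -> x <= l - alpha ^+ 2 / s l.
Proof.
move=> lt_l /rayleigh_setP[sigma [norm1 <- <-]].
have := weighted_cauchy_schwarz (fun i => l - lam i) sigma u
  (fun i => sub_lam_gt0 i lt_l).
have -> : \sum_i (l - lam i) * sigma i ^+ 2 = l - \sum_i lam i * sigma i ^+ 2.
  rewrite -[l in RHS]mulr1 -norm1 mulr_sumr -sumrB.
  by apply: eq_bigr => i _; rewrite mulrBl.
rewrite -/(s l) -ler_pdivrMr ?s_lu_gt0 //; lra.
Qed.

Lemma dual_set_neq0 alpha : dual alpha !=set0.
Proof.
exists (lam N + 1 - alpha ^+ 2 / s (lam N + 1)).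
by exists (lam N + 1) => //=; rewrite ltrDl.
Qed.

Lemma dual_set_lbound alpha x : rayleigh alpha x -> lbound (dual alpha) x.
Proof. by move=> rx _ [l lt_l <-]; exact: rayleigh_le_dual. Qed.

Lemma inf_dual_le_max alpha : has_lbound (dual alpha) -> inf (dual alpha) <= lam N.
Proof.
move=> lbd; apply/ler_addgt0Pr => e e_gt0.
have lt_e : lam N < lam N + e by rewrite ltrDl.
apply: le_trans (ge_inf lbd _) _; first by exists (lam N + e).
by rewrite lerBlDr lerDl divr_ge0 ?sqr_ge0 // ltW // s_lu_gt0.
Qed.

Lemma rayleigh_set_lam_max alpha :
  `|alpha| = `|u N| -> u N != 0 -> rayleigh alpha (lam N).
Proof.
move=> alpha_eq uN_neq0.
have alpha2 : alpha ^+ 2 = u N ^+ 2.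
  by rewrite -real_normK ?num_real // alpha_eq real_normK ?num_real.
pose sigma i := if i == N then alpha / u N else 0.
have sum_at_N (F : 'I_n.+1 -> R -> R) : (forall i, F i 0 = 0) ->
    \sum_i F i (sigma i) = F N (alpha / u N).
  move=> F0; rewrite (bigD1 N) //= {1}/sigma eqxx big1 ?addr0 //.
  by move=> i /negbTE iN; rewrite /sigma iN.
have sigma2 : (alpha / u N) ^+ 2 = 1 by rewrite expr_div_n alpha2 divff // sqrf_eq0.
apply/rayleigh_setP; exists sigma; split.
- by rewrite (sum_at_N (fun _ x => x ^+ 2)) ?sigma2 // => i; rewrite expr0n.
- by rewrite (sum_at_N (fun i x => x * u i)) ?divfK // => i; rewrite mul0r.
- rewrite (sum_at_N (fun i x => lam i * x ^+ 2)) ?sigma2 ?mulr1 //.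
  by move=> i; rewrite expr0n mulr0.
Qed.

Lemma rayleigh_set_critical alpha l :
  lam N < l -> s l ^+ 2 = alpha ^+ 2 * s2 l ->
  rayleigh alpha (l - alpha ^+ 2 / s l).
Proof.
move=> lt_l crit.
have s_neq0 : s l != 0 by rewrite gt_eqF ?s_lu_gt0.
have d_neq0 i : l - lam i != 0 by rewrite gt_eqF ?sub_lam_gt0.
pose sigma i := alpha * u i / ((l - lam i) * s l).
have norm1 : \sum_i sigma i ^+ 2 = 1.
  transitivity (alpha ^+ 2 / s l ^+ 2 * s2 l); last first.
    by rewrite mulrAC -crit divff // sqrf_eq0.
  rewrite [s2 l]/s2_lu mulr_sumr; apply: eq_bigr => i _.
  by rewrite /sigma; field; rewrite d_neq0 s_neq0.
apply/rayleigh_setP; exists sigma; split => //.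
- transitivity (alpha / s l * \sum_i u i ^+ 2 / (l - lam i)).
    rewrite mulr_sumr; apply: eq_bigr => i _.
    by rewrite /sigma; field; rewrite d_neq0 s_neq0.
  by rewrite -/(s l) divfK.
- transitivity (\sum_i (l * sigma i ^+ 2 - (l - lam i) * sigma i ^+ 2)).
    by apply: eq_bigr => i _; ring.
  rewrite sumrB -mulr_sumr norm1 mulr1; congr (_ - _).
  transitivity (alpha ^+ 2 / s l ^+ 2 * \sum_i u i ^+ 2 / (l - lam i)).
    rewrite mulr_sumr; apply: eq_bigr => i _.
    by rewrite /sigma; field; rewrite d_neq0 s_neq0.
  by rewrite -/(s l); field.
Qed.

Lemma sqr_s_lu_le_near alpha : u N != 0 -> `|u N| < `|alpha| ->
  exists2 a, lam N < a & s a ^+ 2 <= alpha ^+ 2 * s2 a.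
Proof.
move=> uN_neq0 uN_lt.
set K := \sum_(i | i != N) u i ^+ 2 / (lam N - lam i).
have K_ge0 : 0 <= K.
  apply: sumr_ge0 => i iN.
  by rewrite divr_ge0 ?sqr_ge0 // subr_ge0 ltW ?lam_lt_max.
have uN_gt0 : 0 < `|u N| by rewrite normr_gt0.
set e := `|u N| * (`|alpha| - `|u N|) / (K + 1).
have e_gt0 : 0 < e by rewrite divr_gt0 ?mulr_gt0 ?subr_gt0 //; lra.
have lt_a : lam N < lam N + e by rewrite ltrDl.
exists (lam N + e) => //.
have eE : lam N + e - lam N = e by rewrite addrAC subrr add0r.
have s_le : s (lam N + e) <= `|alpha| * `|u N| / e.
  have K1 : `|alpha| * `|u N| / e - u N ^+ 2 / e = K + 1.
    rewrite /e -real_normK ?num_real //; field.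
    by rewrite !gt_eqF ?subr_gt0 //; lra.
  have rest : \sum_(i | i != N) u i ^+ 2 / (lam N + e - lam i) <= K.
    apply: ler_sum => i iN; rewrite ler_wpM2l ?sqr_ge0 //.
    rewrite lef_pV2 ?posrE ?(sub_lam_gt0 _ lt_a) ?subr_gt0 ?lam_lt_max //.
    by rewrite lerD2r lerDl ltW.
  rewrite /s_lu (bigD1 N) //= eE; lra.
have s2_ge : u N ^+ 2 / e ^+ 2 <= s2 (lam N + e).
  rewrite /s2_lu (bigD1 N) //= eE lerDl.
  by apply: sumr_ge0 => i _; rewrite divr_ge0 ?sqr_ge0.
have s_sq : s (lam N + e) ^+ 2 <= (`|alpha| * `|u N| / e) ^+ 2.
  have s_ge0 : 0 <= s (lam N + e) by exact/ltW/s_lu_gt0.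
  by rewrite lerXn2r ?nnegrE // (le_trans s_ge0 s_le).
apply: le_trans s_sq _.
have -> : (`|alpha| * `|u N| / e) ^+ 2 = alpha ^+ 2 * (u N ^+ 2 / e ^+ 2).
  rewrite -[alpha ^+ 2]real_normK ?num_real // -[u N ^+ 2]real_normK ?num_real //.
  by field; rewrite gt_eqF.
by rewrite ler_wpM2l ?sqr_ge0.
Qed.

Lemma sqr_s_lu_ge_far alpha l : `|alpha| < 1 -> lam N < l ->
  lam N + (lam N - lam ord0) / (1 - `|alpha|) <= l -> alpha ^+ 2 * s2 l <= s l ^+ 2.
Proof.
move=> alpha_lt1 lt_l l_ge.
set X := l - lam N; set Y := l - lam ord0.
have X_gt0 : 0 < X by rewrite subr_gt0.
have Y_gt0 : 0 < Y by rewrite sub_lam_gt0.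
have aY_le : `|alpha| * Y <= X.
  have span_ge0 : 0 <= lam N - lam ord0 by rewrite subr_ge0 lam_min_le.
  have : lam N - lam ord0 <= X * (1 - `|alpha|).
    by rewrite -ler_pdivrMr ?subr_gt0 // /X lerBrDl.
  have := normr_ge0 alpha; rewrite /Y /X; nra.
have s2_le : s2 l <= (X ^+ 2)^-1.
  rewrite /s2_lu -[(X ^+ 2)^-1]mul1r -u_norm1 mulr_suml; apply: ler_sum => i _.
  rewrite ler_wpM2l ?sqr_ge0 // lef_pV2 ?posrE ?exprn_gt0 ?sub_lam_gt0 //.
  rewrite lerXn2r ?nnegrE ?(ltW X_gt0) ?(ltW (sub_lam_gt0 _ lt_l)) //.
  by rewrite lerD2l lerN2 lam_le_max.
have Yinv_le := s_lu_ge lt_l.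
have ratio_le : `|alpha| / X <= Y^-1 by rewrite ler_pdivrMr // mulrC ler_pdivlMr.
have ratio_sq : alpha ^+ 2 * (X ^+ 2)^-1 = (`|alpha| / X) ^+ 2.
  by rewrite expr_div_n real_normK ?num_real.
have ratio_ge0 : 0 <= `|alpha| / X by rewrite divr_ge0 // ltW.
have Yinv_ge0 : 0 <= Y^-1 by rewrite invr_ge0 ltW.
apply: (le_trans (ler_wpM2l (sqr_ge0 alpha) s2_le)); rewrite ratio_sq.
apply: (@le_trans _ _ (Y^-1 ^+ 2)); first by rewrite lerXn2r ?nnegrE.
by rewrite lerXn2r ?nnegrE // (le_trans Yinv_ge0 Yinv_le).
Qed.

Lemma exists_critical_point alpha :
  u N != 0 -> `|u N| < `|alpha| -> `|alpha| < 1 ->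
  exists2 l, lam N < l & s l ^+ 2 = alpha ^+ 2 * s2 l.
Proof.
move=> uN_neq0 uN_lt alpha_lt1.
have [a lt_a near_a] := sqr_s_lu_le_near alpha uN_neq0 uN_lt.
set b := a + (lam N - lam ord0) / (1 - `|alpha|).
have shift_ge0 : 0 <= (lam N - lam ord0) / (1 - `|alpha|).
  by rewrite divr_ge0 ?subr_ge0 ?lam_min_le // ltW.
have le_ab : a <= b by rewrite lerDl.
have lt_b : lam N < b by apply: lt_le_trans le_ab.
have far_b : alpha ^+ 2 * s2 b <= s b ^+ 2.
  by apply: sqr_s_lu_ge_far => //; rewrite lerD2r ltW.
pose h l := s l ^+ 2 - alpha ^+ 2 * s2 l.
have h_cont : {within `[a, b], continuous h}.
  apply: continuous_in_subspaceT => x; rewrite inE /= in_itv /= => /andP[a_le _].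
  have x_neq i : x != lam i.
    by rewrite gt_eqF // (le_lt_trans (lam_le_max i)) // (lt_le_trans lt_a).
  have s_cont := continuous_sum_frac 1 (fun i => u i ^+ 2) lam x x_neq.
  have s2_cont := continuous_sum_frac 2 (fun i => u i ^+ 2) lam x x_neq.
  by apply: cvgB; [exact: (cvgM s_cont s_cont) | exact: (cvgM (cvg_cst _) s2_cont)].
have h_sign : Num.min (h a) (h b) <= 0 <= Num.max (h a) (h b).
  by rewrite ge_min le_max !subr_ge0 !subr_le0 near_a far_b orbT.
have [l /andP[a_le _] /eqP] := IVT le_ab h_cont h_sign.
by rewrite subr_eq0 => /eqP crit; exists l => //; exact: lt_le_trans lt_a a_le.
Qed.

Lemma rayleigh_sup_eq_dual_inf alpha : u N != 0 -> `|u N| <= `|alpha| < 1 ->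
  sup (rayleigh alpha) = inf (dual alpha).
Proof.
move=> uN_neq0 /andP[uN_le alpha_lt1].
have dual_lb x : rayleigh alpha x -> has_lbound (dual alpha).
  by move=> rx; exists x; exact: dual_set_lbound.
apply: sup_eq_inf_reached; first exact: dual_set_neq0.
  by move=> x y rx dy; exact: dual_set_lbound rx y dy.
move: uN_le; rewrite le_eqVlt => /orP[/eqP uN_eq | uN_lt].
  have r_max := rayleigh_set_lam_max alpha (esym uN_eq) uN_neq0.
  by exists (lam N) => //; exact: inf_dual_le_max (dual_lb _ r_max).
have [l lt_l crit] := exists_critical_point alpha uN_neq0 uN_lt alpha_lt1.
have r_crit := rayleigh_set_critical alpha l lt_l crit.
by exists (l - alpha ^+ 2 / s l) => //; apply: (ge_inf (dual_lb _ r_crit)); exists l.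
Qed.

Lemma exists_rayleigh_ge alpha : `|u N| < 1 -> `|alpha| <= `|u N| ->
  exists2 x, rayleigh alpha x & lam N - u N ^+ 2 * (lam N - lam ord0) <= x.
Proof.
move=> uN_lt1 alpha_le.
set r := Num.sqrt (1 - u N ^+ 2).
have uN2_lt1 : u N ^+ 2 < 1.
  by rewrite -real_normK ?num_real // exprn_ilt1 ?normr_ge0.
have r2 : r ^+ 2 = 1 - u N ^+ 2 by rewrite sqr_sqrtr // subr_ge0 ltW.
have r_neq0 : r != 0 by rewrite gt_eqF // sqrtr_gt0 subr_gt0.
have uN_r : u N ^+ 2 + r ^+ 2 = 1 by rewrite r2 addrC subrK.
have [c [d [cd1 dot d2_le]]] := unit_circle_point _ _ _ uN_r alpha_le.
have rest : \sum_(i | i != N) u i ^+ 2 = r ^+ 2.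
  by move: u_norm1; rewrite (bigD1 N) //= r2 => <-; rewrite addrAC subrr add0r.
pose sigma i := if i == N then c else d / r * u i.
have sum_sigma (F : 'I_n.+1 -> R -> R) :
    \sum_i F i (sigma i) = F N c + \sum_(i | i != N) F i (d / r * u i).
  rewrite (bigD1 N) //= {1}/sigma eqxx; congr (_ + _).
  by apply: eq_bigr => i /negbTE iN; rewrite /sigma iN.
have off_N : \sum_(i | i != N) (d / r * u i) ^+ 2 = d ^+ 2.
  under eq_bigr do rewrite exprMn.
  by rewrite -mulr_sumr rest; field.
exists (\sum_i lam i * sigma i ^+ 2).
  apply/rayleigh_setP; exists sigma; split => //.
    by rewrite (sum_sigma (fun _ x => x ^+ 2)) off_N.
  rewrite (sum_sigma (fun i x => x * u i)) -dot; congr (_ + _).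
  transitivity (d / r * \sum_(i | i != N) u i ^+ 2); last by rewrite rest; field.
  by rewrite mulr_sumr; apply: eq_bigr => i _; rewrite expr2 mulrA.
rewrite (sum_sigma (fun i x => lam i * x ^+ 2)).
have off_ge : lam ord0 * d ^+ 2 <= \sum_(i | i != N) lam i * (d / r * u i) ^+ 2.
  rewrite -off_N mulr_sumr; apply: ler_sum => i _.
  by rewrite ler_wpM2r ?sqr_ge0 ?lam_min_le.
have gap : 0 <= (u N ^+ 2 - d ^+ 2) * (lam N - lam ord0).
  by rewrite mulr_ge0 // subr_ge0 ?lam_min_le.
have c2 : c ^+ 2 = 1 - d ^+ 2 by rewrite -cd1 addrK.
rewrite c2; lra.
Qed.

End RayleighDuality.

Theorem lemma3p1 (R : realType) (n : nat) (lam u : 'I_n.+1 -> R)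
  (hlam : forall i j : 'I_n.+1, (i < j)%N -> lam i < lam j)
  (hu : forall i : 'I_n.+1, -1 < u i < 1 /\ u i != 0)
  (hsum : \sum_(i < n.+1) u i ^+ 2 = 1) :
  (forall alpha : R, `|u ord_max| <= `|alpha| < 1 ->
     sup (rayleigh_set lam u alpha) = inf (dual_set lam u (lam ord_max) alpha)) /\
  (forall alpha : R, `|alpha| <= `|u ord_max| ->
     lam ord_max - 2 * u ord_max ^+ 2 / Num.sqrt (1 - u ord_max ^+ 2)
                   * (lam ord_max - lam ord0)
       <= sup (rayleigh_set lam u alpha)
     /\ sup (rayleigh_set lam u alpha) <= lam ord_max).
Proof.
have uN_neq0 : u ord_max != 0 := (hu ord_max).2.
have uN_lt1 : `|u ord_max| < 1 by rewrite ltr_norml; exact: (hu _).1.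
split=> alpha alpha_range; first exact: rayleigh_sup_eq_dual_inf.
have [x rx x_ge] := exists_rayleigh_ge hlam hsum alpha uN_lt1 alpha_range.
have le_max := rayleigh_le_max hlam alpha.
have ub : has_ubound (rayleigh_set lam u alpha).
  by exists (lam ord_max) => y; exact: le_max.
split; last by apply: ge_sup; [exists x | exact: le_max].
apply: le_trans (le_trans _ x_ge) (ub_le_sup ub rx).
rewrite lerD2l lerN2 ler_wpM2r ?subr_ge0 ?lam_min_le //.
have uN2_lt1 : u ord_max ^+ 2 < 1.
  by rewrite -real_normK ?num_real // exprn_ilt1 ?normr_ge0.
set r := Num.sqrt _.
have r_gt0 : 0 < r by rewrite sqrtr_gt0 subr_gt0.
have r_le1 : r <= 1 by rewrite -sqrtr1 ler_sqrt // gerBl sqr_ge0.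
by rewrite ler_pdivlMr //; nra.
Qed.
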